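(* Let $A\in\mathbb{R}^{n\times n}$ be symmetric and let $X_0 = AWA$ for some matrix $W\in\mathbb{R}^{n\times n}$. Define iterates $$X_{k+1} = X_k + AS_k(S_k^\top A^2 S_k)^\dagger S_k^\top (A - A X_k A) S_k (S_k^\top A^2 S_k)^\dagger S_k^\top A,\qquad k\ge0,$$ for arbitrary matrices $S_k\in\mathbb{R}^{n\times\tau}$. Then for each $k\ge0$ there exists a matrix $Q_k$ such that $X_k - A^\dagger = A Q_k A$.
   Context: $A^\dagger$ denotes the Moore–Penrose pseudoinverse of $A$. *)

From HB Require Import structures.
From mathcomp Require Import all_boot all_algebra.
From mathcomp Require Import reals.
From Stdlib Require Import ClassicalEpsilon.
Set Implicit Arguments. Unset Strict Implicit. Unset Printing Implicit Defensive.
Import GRing.Theory.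
Local Open Scope ring_scope.

Definition is_MP_inverse (R : realType) (m n : nat)
    (A : 'M[R]_(m, n)) (B : 'M[R]_(n, m)) : Prop :=
  [/\ A *m B *m A = A, B *m A *m B = B,
      (A *m B)^T = A *m B & (B *m A)^T = B *m A].

(* The Moore–Penrose pseudoinverse A^dagger (exists and is unique over the reals). *)
Definition mpinv (R : realType) (m n : nat) (A : 'M[R]_(m, n)) : 'M[R]_(n, m) :=
  epsilon (inhabits 0) (is_MP_inverse A).

Fixpoint sketch_iter (R : realType) (n tau : nat) (A W : 'M[R]_n)
    (S : nat -> 'M[R]_(n, tau)) (k : nat) : 'M[R]_n :=
  match k with
  | 0 => A *m W *m A
  | k'.+1 =>
      let X := sketch_iter A W S k' in
      let Sk := S k' in
      let P := mpinv (Sk^T *m (A *m A) *m Sk) in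
      X + A *m Sk *m P *m Sk^T *m (A - A *m X *m A) *m Sk *m P *m Sk^T *m A
  end.

Arguments is_MP_inverse {R m n} A B.
Arguments mpinv {R m n} A.
Arguments sketch_iter {R n tau} A W S k.

From HB Require Import structures.
From mathcomp Require Import all_boot all_algebra.
From mathcomp Require Import reals.
From Stdlib Require Import ClassicalEpsilon.
Set Implicit Arguments. Unset Strict Implicit.
Import GRing.Theory Num.Theory.
Local Open Scope ring_scope.

(* Every iterate lies in A M A: X_0 does by definition, and each update is A (...) A.
   So does A^dagger = A^dagger A A^dagger A A^dagger: the Penrose symmetry conditions
   turn A^dagger A and A A^dagger into A^T A^dagger^T and A^dagger^T A^T, whence
   A^dagger = A^T (A^dagger^T A^dagger A^dagger^T) A^T, and A^T = A. *)

Lemma row_mul_tr_eq0 (R : realDomainType) k (v : 'rV[R]_k) :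
  v *m v^T = 0 -> v = 0.
Proof.
move=> /(congr1 (fun M : 'M[R]_1 => M 0 0)); rewrite !mxE => /eqP.
rewrite psumr_eq0; last by move=> j _; rewrite mxE -expr2 sqr_ge0.
move=> /allP v2_eq0; apply/matrixP => i j; rewrite mxE (ord1 i).
by have := v2_eq0 j (mem_index_enum _); rewrite mxE -expr2 sqrf_eq0 => /eqP.
Qed.

Lemma row_free_mul_tr_unit (R : realFieldType) r k (M : 'M[R]_(r, k)) :
  row_free M -> M *m M^T \in unitmx.
Proof.
move=> freeM; rewrite -row_free_unit; apply: inj_row_free => v vMMT0.
have : (v *m M) *m (v *m M)^T = 0.
  by rewrite trmx_mul mulmxA -(mulmxA v) vMMT0 mul0mx.
by move/row_mul_tr_eq0/eqP; rewrite mulmx_free_eq0 // => /eqP.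
Qed.

Lemma is_MP_inverse_rank_factor (R : realType) m r n
    (C : 'M[R]_(m, r)) (F : 'M[R]_(r, n)) :
  F *m F^T \in unitmx -> C^T *m C \in unitmx ->
  is_MP_inverse (C *m F) (F^T *m invmx (F *m F^T) *m invmx (C^T *m C) *m C^T).
Proof.
set G := F *m F^T; set H := C^T *m C => unitG unitH.
have GT : G^T = G by rewrite /G trmx_mul trmxK.
have HT : H^T = H by rewrite /H trmx_mul trmxK.
have FFT p (Y : 'M_(r, p)) : F *m (F^T *m Y) = G *m Y by rewrite mulmxA.
have CTC p (Y : 'M_(r, p)) : C^T *m (C *m Y) = H *m Y by rewrite mulmxA.
have GK p (Y : 'M_(r, p)) : G *m (invmx G *m Y) = Y.
  by rewrite mulmxA mulmxV // mul1mx.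
have HK p (Y : 'M_(r, p)) : invmx H *m (H *m Y) = Y.
  by rewrite mulmxA mulVmx // mul1mx.
split.
- by rewrite -!mulmxA FFT GK CTC HK.
- by rewrite -!mulmxA CTC HK FFT GK.
- by rewrite -!mulmxA FFT GK !trmx_mul trmxK trmx_inv HT !mulmxA.
- by rewrite -!mulmxA CTC HK !trmx_mul trmxK trmx_inv GT !mulmxA.
Qed.

Lemma is_MP_inverse_exists (R : realType) m n (A : 'M[R]_(m, n)) :
  exists B, is_MP_inverse A B.
Proof.
have unitF := row_free_mul_tr_unit (row_base_free A).
have freeCT : row_free (col_base A)^T.
  by rewrite /row_free mxrank_tr; apply: col_base_full.
have := row_free_mul_tr_unit freeCT; rewrite trmxK => unitC.
have := is_MP_inverse_rank_factor unitF unitC; rewrite mulmx_base => MP.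
by eexists; exact: MP.
Qed.

Lemma mpinvP (R : realType) m n (A : 'M[R]_(m, n)) : is_MP_inverse A (mpinv A).
Proof. exact: epsilon_spec (is_MP_inverse_exists A). Qed.

Lemma is_MP_inverse_sandwich (R : realType) m n
    (A : 'M[R]_(m, n)) (B : 'M[R]_(n, m)) :
  is_MP_inverse A B -> B = A^T *m (B^T *m B *m B^T) *m A^T.
Proof.
case=> _ BAB ABT BAT.
have BA : B *m A = A^T *m B^T by rewrite -BAT trmx_mul.
have AB : A *m B = B^T *m A^T by rewrite -ABT trmx_mul.
rewrite {1}(_ : B = (B *m A) *m B *m (A *m B)); last by rewrite mulmxA !BAB.
by rewrite BA AB !mulmxA.
Qed.

Lemma sketch_iter_sandwich (R : realType) n tau (A W : 'M[R]_n)
    (S : nat -> 'M[R]_(n, tau)) k :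
  exists Q, sketch_iter A W S k = A *m Q *m A.
Proof.
elim: k => [|k [Q IH]] /=; first by exists W.
set X := sketch_iter A W S k in IH *; set P := mpinv _.
exists (Q + S k *m P *m (S k)^T *m (A - A *m X *m A) *m S k *m P *m (S k)^T).
by rewrite IH mulmxDr mulmxDl !mulmxA.
Qed.

Theorem lemma4 (R : realType) (n tau : nat) (A W : 'M[R]_n)
    (S : nat -> 'M[R]_(n, tau)) :
  A^T = A ->
  forall k : nat, exists Q : 'M[R]_n, (sketch_iter A W S k - mpinv A = A *m Q *m A)%R.
Proof.
move=> AT k; have [Q ->] := sketch_iter_sandwich A W S k.
rewrite [mpinv A](is_MP_inverse_sandwich (mpinvP A)) AT.
by eexists; rewrite -mulmxBl -mulmxBr.
Qed.
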